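(* Let $A$ be a set and $T=A^*$ the free monoid on $A$. Let $Y$ be a semilattice and let $\cdot$ be a left partial action of $T$ on $Y$ satisfying axioms (A), (B), (C), which is a partially defined action and such that the restriction semigroup $M(T,Y)$ is an ultra $F$-restriction monoid. Let $X=(Y\times T)/\!\approx$ be the poset and $*$ the left action of $T$ on $X$ given by $t*[y,s]=[y,ts]$ (constructed as in the context). Then: (1) $X$ is a meet semilattice; (2) $*$ is an action of $T$ on $X$ by order-embeddings such that for every $t\in T$ the range $\{t*x\colon x\in X\}$ is an order ideal of $X$, so that the $W$-product $W(T,X)$ can be formed; (3) $M(T,Y)$ embeds into $W(T,X)$ as a $(2,1,1)$-subalgebra (i.e. there is an injective homomorphism of $(2,1,1)$-algebras $M(T,Y)\to W(T,X)$).
   Context: A restriction semigroup is an algebra $(S,\cdot,{}^*,{}^+)$ where $(S,\cdot)$ is a semigroup and the identities $xx^*=x$, $x^*y^*=y^*x^*$, $(xy^* )^*=x^*y^*$, $x^*y=y(xy)^*$, $x^+x=x$, $x^+y^+=y^+x^+$, $(x^+y)^+=x^+y^+$, $xy^+=(xy)^+x$, $(x^+)^*=x^+$, $(x^* )^+=x^*$ hold; homomorphisms preserve the product and both unary operations. If it has an identity it is a restriction monoid. $P(S)=\{x^*\colon x\in S\}=\{x^+\colon x\in S\}$ is the semilattice of projections. $\sigma$ is the least congruence identifying all projections ($a\,\sigma\, b$ iff $ea=eb$ for some $e\in P(S)$). $S$ is proper if ($a^*=b^*$ and $a\,\sigma\, b$) implies $a=b$ and ($a^+=b^+$ and $a\,\sigma\,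 b$) implies $a=b$. The natural partial order is $a\le b$ iff $a=eb$ for some $e\in P(S)$. $S$ is $F$-restriction if every $\sigma$-class has a maximum element. A left partial action of a monoid $T$ on a set $Y$ is a partial map $(t,y)\mapsto t\cdot y$ with $1\cdot y$ defined and equal to $y$, and such that if $t\cdot y$ and $s\cdot(t\cdot y)$ are defined then $(st)\cdot y$ is defined and equals $s\cdot(t\cdot y)$. Write $\varphi_t$ for the partial map $y\mapsto t\cdot y$. For $Y$ a semilattice, the axioms are: (A) $\mathrm{dom}(\varphi_t)$ and $\mathrm{ran}(\varphi_t)$ are order ideals of $Y$; (B) $\varphi_t$ is an order-isomorphism from $\mathrm{dom}(\varphi_t)$ onto $\mathrm{ran}(\varphi_t)$; (C) $\mathrm{dom}(\varphi_t)\neq\varnothing$. The reverse right partial action $\circ$ is: $y\circ t$ is defined iff $y\in\mathrm{ran}(\varphi_t)$, and then $y\circ t=\varphi_t^{-1}(y)$. Then $M(T,Y)=\{(y,t)\in Y\times T\colon y\circ t \text{ defined}\}$ with $(x,s)(y,t)=(s\cdot((x\circ s)\wedge y),st)$, $(y,t)^*=(y\circ t,1)$, $(y,t)^+=(y,1)$ is a proper restriction semigroup. For a proper restriction semigroup $S$, its underlying left partial action is the partial action of $S/\sigma$ on $E=P(S)$: $t\cdot e$ is defined iff there is $a\in t$ with $a^*\ge e$, and then $t\cdot e=(ae)^+$. A left partial action is a partially defined action if for all $s,t,x$: $(st)\cdot x$ is defined iff $t\cdot x$ and $s\cdot(t\cdot x)$ are defined. A restriction semigroup is ultra proper if it is proper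 and its underlying left partial action is a partially defined action; an ultra $F$-restriction monoid is an ultra proper $F$-restriction monoid. Construction of $X$: for $(x,s),(y,t)\in Y\times T$ put $(x,s)\to(y,t)$ if there is $p\in T$ with $s=tp$, $p\cdot x$ defined and $p\cdot x=y$. Let $\sim$ be the equivalence relation generated by $\to$, with classes $[x,s]_\sim$. On $(Y\times T)/\!\sim$ put $A\ge B$ if there are $(x,s)\in A$ and $(y,s)\in B$ with $x\ge y$; this is a preorder. Let $(x,s)\approx(y,t)$ iff $[x,s]_\sim\le[y,t]_\sim$ and $[y,t]_\sim\le[x,s]_\sim$; $X=(Y\times T)/\!\approx$ with the induced partial order and classes $[x,s]$. The action $t*[y,s]=[y,ts]$ is well defined. $W$-product: if a monoid $T$ acts on the left on a semilattice $X$ by order-embeddings with each range $t*X$ an order ideal, then $W(T,X)=\{(t*y,t)\colon y\in X,t\in T\}$ with $(t*y,t)(s*x,s)=(t*y\wedge (ts)*x,ts)$, $(t*y,t)^*=(y,1)$, $(t*y,t)^+=(t*y,1)$. *)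

(* Free monoid T = A^* is [list A] with concatenation [++]
   (so the product st is s ++ t) and identity [nil]. *)
From Stdlib Require Import List Relations ClassicalEpsilon.
Import ListNotations.

Set Implicit Arguments.
Unset Strict Implicit.

Definition is_semilattice (Y : Type) (meet : Y -> Y -> Y) : Prop :=
  (forall x y z, meet x (meet y z) = meet (meet x y) z) /\
  (forall x y, meet x y = meet y x) /\
  (forall x, meet x x = x).

Definition leY (Y : Type) (meet : Y -> Y -> Y) (x y : Y) : Prop := meet x y = x.

Definition is_left_partial_action (A Y : Type) (act : list A -> Y -> option Y) : Prop :=
  (forall y, act [] y = Some y) /\
  (forall s t y z w, act t y = Some z -> act s z = Some w -> act (s ++ t) y = Some w).

Definition in_dom (A Y : Type) (act : list A -> Y -> option Y) (t : list A) (y : Y) :=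
  exists z, act t y = Some z.
Definition in_ran (A Y : Type) (act : list A -> Y -> option Y) (t : list A) (y : Y) :=
  exists z, act t z = Some y.

Definition axiomA (A Y : Type) (meet : Y -> Y -> Y) (act : list A -> Y -> option Y) :=
  forall t, (forall y y', in_dom act t y -> leY meet y' y -> in_dom act t y') /\
            (forall y y', in_ran act t y -> leY meet y' y -> in_ran act t y').

Definition axiomB (A Y : Type) (meet : Y -> Y -> Y) (act : list A -> Y -> option Y) :=
  forall t y1 y2 z1 z2, act t y1 = Some z1 -> act t y2 = Some z2 ->
    (leY meet y1 y2 <-> leY meet z1 z2).

Definition axiomC (A Y : Type) (act : list A -> Y -> option Y) :=
  forall t, exists y, in_dom act t y.

Definition partially_defined (A Y : Type) (act : list A -> Y -> option Y) :=
  forall s t x, in_dom act (s ++ t) x <->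
    (exists z, act t x = Some z /\ in_dom act s z).

(* reverse right partial action: y o t = phi_t^{-1}(y) *)
Definition rev_act (A Y : Type) (act : list A -> Y -> option Y) (t : list A) (y : Y)
  : option Y :=
  match excluded_middle_informative (in_ran act t y) with
  | left H => Some (proj1_sig (constructive_indefinite_description _ H))
  | right _ => None
  end.

(* carrier: pairs (y,t) with y o t defined; operations are total on Y * T
   with irrelevant default values outside the carrier. *)
Definition inM (A Y : Type) (act : list A -> Y -> option Y) (p : Y * list A) : Prop :=
  in_ran act (snd p) (fst p).

Definition mulM (A Y : Type) (meet : Y -> Y -> Y) (act : list A -> Y -> option Y)
  (p q : Y * list A) : Y * list A :=
  let (x, s) := p in let (y, t) := q in
  (match rev_act act s x with
   | Some u => match act s (meet u y) with Some v => v | None => x end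
   | None => x end, s ++ t).

Definition starM (A Y : Type) (act : list A -> Y -> option Y) (p : Y * list A)
  : Y * list A :=
  (match rev_act act (snd p) (fst p) with Some u => u | None => (fst p) end, []).

Definition plusM (A Y : Type) (p : Y * list A) : Y * list A := ((fst p), []).

Section Restriction.
Variables (S : Type) (inS : S -> Prop) (mul : S -> S -> S) (star plus : S -> S).

Definition is_restriction_semigroup : Prop :=
  (forall x y, inS x -> inS y -> inS (mul x y)) /\
  (forall x, inS x -> inS (star x)) /\ (forall x, inS x -> inS (plus x)) /\
  (forall x y z, inS x -> inS y -> inS z -> mul x (mul y z) = mul (mul x y) z) /\
  (forall x, inS x -> mul x (star x) = x) /\
  (forall x y, inS x -> inS y -> mul (star x) (star y) = mul (star y) (star x)) /\
  (forall x y, inS x -> inS y -> star (mul x (star y)) = mul (star x) (star y)) /\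
  (forall x y, inS x -> inS y -> mul (star x) y = mul y (star (mul x y))) /\
  (forall x, inS x -> mul (plus x) x = x) /\
  (forall x y, inS x -> inS y -> mul (plus x) (plus y) = mul (plus y) (plus x)) /\
  (forall x y, inS x -> inS y -> plus (mul (plus x) y) = mul (plus x) (plus y)) /\
  (forall x y, inS x -> inS y -> mul x (plus y) = mul (plus (mul x y)) x) /\
  (forall x, inS x -> star (plus x) = plus x) /\
  (forall x, inS x -> plus (star x) = star x).

Definition is_proj (e : S) : Prop := exists x, inS x /\ e = star x.

Definition rsigma (a b : S) : Prop := exists e, is_proj e /\ mul e a = mul e b.

Definition nat_le (a b : S) : Prop := exists e, is_proj e /\ a = mul e b.

Definition is_proper : Prop :=
  (forall a b, inS a -> inS b -> star a = star b -> rsigma a b -> a = b) /\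
  (forall a b, inS a -> inS b -> plus a = plus b -> rsigma a b -> a = b).

Definition has_identity : Prop :=
  exists one, inS one /\ forall x, inS x -> mul one x = x /\ mul x one = x.

Definition is_F_restriction : Prop :=
  forall a, inS a -> exists m, inS m /\ rsigma a m /\
    forall b, inS b -> rsigma a b -> nat_le b m.

(* underlying left partial action of S/sigma on P(S), via representatives:
   ua c e f  iff  [c]_sigma . e is defined and equals f, i.e. there is a in
   the class of c with a^* >= e, and f = (a e)^+ *)
Definition ua (c e f : S) : Prop :=
  exists a, inS a /\ rsigma a c /\ nat_le e (star a) /\ f = plus (mul a e).

Definition ua_partially_defined : Prop :=
  forall c d e, inS c -> inS d -> is_proj e ->
    ((exists f, ua (mul c d) e f) <-> (exists g, ua d e g /\ exists f, ua c g f)).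

Definition is_ultra_proper : Prop := is_proper /\ ua_partially_defined.

Definition is_ultra_F_restriction_monoid : Prop :=
  is_restriction_semigroup /\ has_identity /\ is_ultra_proper /\ is_F_restriction.

End Restriction.

Definition arrow (A Y : Type) (act : list A -> Y -> option Y) (p q : Y * list A) : Prop :=
  exists r, (snd p) = (snd q) ++ r /\ act r (fst p) = Some (fst q).

Definition simX (A Y : Type) (act : list A -> Y -> option Y) : relation (Y * list A) :=
  clos_refl_sym_trans _ (arrow act).

Definition leX (A Y : Type) (meet : Y -> Y -> Y) (act : list A -> Y -> option Y)
  (p q : Y * list A) : Prop :=
  exists x y s, simX act q (x, s) /\ simX act p (y, s) /\ leY meet y x.

(* ~~ : the induced equivalence; X is Y x T modulo approxX, ordered by leX *)
Definition approxX (A Y : Type) (meet : Y -> Y -> Y) (act : list A -> Y -> option Y)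
  (p q : Y * list A) : Prop := leX meet act p q /\ leX meet act q p.

Definition actX (A Y : Type) (t : list A) (p : Y * list A) : Y * list A :=
  ((fst p), t ++ (snd p)).

Definition is_meetX (A Y : Type) (meet : Y -> Y -> Y) (act : list A -> Y -> option Y)
  (m p q : Y * list A) : Prop :=
  leX meet act m p /\ leX meet act m q /\
  forall r, leX meet act r p -> leX meet act r q -> leX meet act r m.

Definition inW (A Y : Type) (meet : Y -> Y -> Y) (act : list A -> Y -> option Y)
  (w : (Y * list A) * list A) : Prop :=
  exists y, approxX meet act (fst w) (actX (snd w) y).

(* equality in W(T,X) (first component is a ~~-class) *)
Definition eqW (A Y : Type) (meet : Y -> Y -> Y) (act : list A -> Y -> option Y)
  (w v : (Y * list A) * list A) : Prop :=
  approxX meet act (fst w) (fst v) /\ (snd w) = (snd v).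

(* Since T is free, the two arrows leaving a pair (x, s) strip comparable
   prefixes off s, and the action being partially defined lets the longer one
   factor through the shorter one; so arrows are confluent and ~ is plain
   joinability.  The order on X can then be read at a common word, and left
   translation by t, which cancels on words and commutes with arrows, is an
   order-embedding onto a down-set.  The F-restriction hypothesis says that the
   domain of each phi_t has a greatest element d_t; this is what makes meets
   exist, computed over the longest common prefix of the two words.  Finally
   (y, t) |-> ([y, 1], t) embeds M(T,Y) into W(T,X). *)

From Stdlib Require Import List Relations ClassicalEpsilon.
Import ListNotations.

Set Implicit Arguments.
Unset Strict Implicit.

Section Semilattice.
Variables (Y : Type) (meet : Y -> Y -> Y).
Hypothesis HY : is_semilattice meet.

Lemma leY_refl x : leY meet x x.
Proof. destruct HY as (_ & _ & Hid). apply Hid. Qed.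

Lemma leY_trans x y z : leY meet x y -> leY meet y z -> leY meet x z.
Proof.
  destruct HY as (Hassoc & _ & _); unfold leY; intros Hxy Hyz.
  rewrite <- Hxy, <- Hassoc, Hyz; reflexivity.
Qed.

Lemma leY_antisym x y : leY meet x y -> leY meet y x -> x = y.
Proof.
  destruct HY as (_ & Hcomm & _); unfold leY; intros Hxy Hyx.
  rewrite <- Hxy, Hcomm; exact Hyx.
Qed.

Lemma leY_meet_l x y : leY meet (meet x y) x.
Proof.
  destruct HY as (Hassoc & Hcomm & Hid); unfold leY.
  rewrite Hcomm, Hassoc, Hid; reflexivity.
Qed.

Lemma leY_meet_r x y : leY meet (meet x y) y.
Proof.
  destruct HY as (Hassoc & _ & Hid); unfold leY.
  rewrite <- Hassoc, Hid; reflexivity.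
Qed.

Lemma leY_meet x y z : leY meet z x -> leY meet z y -> leY meet z (meet x y).
Proof.
  destruct HY as (Hassoc & _ & _); unfold leY; intros Hzx Hzy.
  rewrite Hassoc, Hzx; exact Hzy.
Qed.

End Semilattice.

Lemma rev_act_spec (A Y : Type) (act : list A -> Y -> option Y) t y :
  in_ran act t y -> exists u, rev_act act t y = Some u /\ act t u = Some y.
Proof.
  intros Hran; unfold rev_act.
  destruct (excluded_middle_informative (in_ran act t y)) as [H | H]; [| contradiction].
  destruct (constructive_indefinite_description _ H) as [u Hu]; eauto.
Qed.

Fixpoint lcp (A : Type) (s t : list A) : list A :=
  match s, t with
  | a :: s', b :: t' =>
      if excluded_middle_informative (a = b) then a :: lcp s' t' else []
  | _, _ => []
  end.

Lemma lcp_prefix_l (A : Type) (s t : list A) : exists s', s = lcp s t ++ s'.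
Proof.
  revert t; induction s as [| a s IH]; intros [| b t]; simpl; eauto.
  destruct (excluded_middle_informative (a = b)); [| now exists (a :: s)].
  destruct (IH t) as [s' E]; exists s'; simpl; congruence.
Qed.

Lemma lcp_prefix_r (A : Type) (s t : list A) : exists t', t = lcp s t ++ t'.
Proof.
  revert t; induction s as [| a s IH]; intros [| b t]; simpl; eauto.
  destruct (excluded_middle_informative (a = b)); [| now exists (b :: t)].
  destruct (IH t) as [t' E]; exists t'; simpl; congruence.
Qed.

Lemma lcp_app_l (A : Type) (u s t : list A) : exists w, lcp (u ++ s) (u ++ t) = u ++ w.
Proof.
  induction u as [| a u IH]; simpl; [eauto |].
  destruct (excluded_middle_informative (a = a)) as [_ | n]; [| contradiction].
  destruct IH as [w E]; exists w; rewrite E; reflexivity.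
Qed.

Record ordered_partial_action (A Y : Type) (meet : Y -> Y -> Y)
  (act : list A -> Y -> option Y) : Prop := {
  opa_semilattice : is_semilattice meet;
  opa_partial_action : is_left_partial_action act;
  opa_ideals : axiomA meet act;
  opa_order_iso : axiomB meet act;
  opa_partially_defined : partially_defined act }.

Section OrderedPartialAction.
Variables (A Y : Type) (meet : Y -> Y -> Y) (act : list A -> Y -> option Y).
Hypothesis G : ordered_partial_action meet act.
Let HY := opa_semilattice G.

Lemma act_nil y : act [] y = Some y.
Proof. apply (opa_partial_action G). Qed.

Lemma act_app s t y z w : act t y = Some z -> act s z = Some w -> act (s ++ t) y = Some w.
Proof. apply (opa_partial_action G). Qed.

Lemma act_app_inv s t y w :
  act (s ++ t) y = Some w -> exists z, act t y = Some z /\ act s z = Some w.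
Proof.
  intros Hw.
  destruct (proj1 (opa_partially_defined G s t y) (ex_intro _ w Hw)) as (z & Hz & w' & Hw').
  exists z; split; [exact Hz |].
  pose proof (act_app Hz Hw'); congruence.
Qed.

Lemma act_le t y1 y2 z1 z2 :
  act t y1 = Some z1 -> act t y2 = Some z2 -> leY meet y1 y2 -> leY meet z1 z2.
Proof. intros H1 H2; apply (opa_order_iso G H1 H2). Qed.

Lemma act_le_inv t y1 y2 z1 z2 :
  act t y1 = Some z1 -> act t y2 = Some z2 -> leY meet z1 z2 -> leY meet y1 y2.
Proof. intros H1 H2; apply (opa_order_iso G H1 H2). Qed.

Lemma act_inj t y1 y2 z : act t y1 = Some z -> act t y2 = Some z -> y1 = y2.
Proof.
  intros H1 H2; apply (leY_antisym HY).
  - exact (act_le_inv H1 H2 (leY_refl HY z)).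
  - exact (act_le_inv H2 H1 (leY_refl HY z)).
Qed.

Lemma act_dom_le t x z y : act t x = Some z -> leY meet y x -> exists w, act t y = Some w.
Proof. intros Hx Hyx; apply (proj1 (opa_ideals G t) x y); [exists z |]; assumption. Qed.

Lemma act_ran_le t x z w : act t x = Some z -> leY meet w z -> exists y, act t y = Some w.
Proof. intros Hx Hwz; apply (proj2 (opa_ideals G t) z w); [exists x |]; assumption. Qed.

Definition joinable (p q : Y * list A) : Prop :=
  exists c, arrow act p c /\ arrow act q c.

Lemma arrow_refl p : arrow act p p.
Proof. exists []; rewrite app_nil_r; split; [reflexivity | apply act_nil]. Qed.

Lemma arrow_trans p q r : arrow act p q -> arrow act q r -> arrow act p r.
Proof.
  intros (r1 & E1 & H1) (r2 & E2 & H2); exists (r2 ++ r1); split.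
  - rewrite E1, E2, app_assoc; reflexivity.
  - exact (act_app H1 H2).
Qed.

Lemma arrow_comparable q c1 c2 :
  arrow act q c1 -> arrow act q c2 -> arrow act c1 c2 \/ arrow act c2 c1.
Proof.
  destruct q as [x s], c1 as [y1 t1], c2 as [y2 t2].
  intros (p1 & E1 & H1) (p2 & E2 & H2); simpl in *; subst s.
  destruct (app_eq_app _ _ _ _ E2) as (l & [(-> & ->) | (-> & ->)]).
  - left; destruct (act_app_inv H2) as (z & Hz1 & Hz2).
    exists l; simpl; split; [reflexivity | congruence].
  - right; destruct (act_app_inv H1) as (z & Hz1 & Hz2).
    exists l; simpl; split; [reflexivity | congruence].
Qed.

Lemma arrow_joinable p q : arrow act p q -> joinable p q.
Proof. intros H; exists q; split; [exact H | apply arrow_refl]. Qed.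

Lemma joinable_refl p : joinable p p.
Proof. apply arrow_joinable, arrow_refl. Qed.

Lemma joinable_sym p q : joinable p q -> joinable q p.
Proof. intros (c & H1 & H2); exists c; split; assumption. Qed.

Lemma joinable_trans p q r : joinable p q -> joinable q r -> joinable p r.
Proof.
  intros (c1 & H1 & H2) (c2 & H3 & H4).
  destruct (arrow_comparable H2 H3) as [H | H].
  - exists c2; split; [exact (arrow_trans H1 H) | exact H4].
  - exists c1; split; [exact H1 | exact (arrow_trans H4 H)].
Qed.

Lemma simX_joinable p q : simX act p q <-> joinable p q.
Proof.
  split.
  - induction 1.
    + apply arrow_joinable; assumption.
    + apply joinable_refl.
    + apply joinable_sym; assumption.
    + eapply joinable_trans; eassumption.
  - intros (c & H1 & H2); apply rst_trans with c; [apply rst_step | apply rst_sym, rst_step];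
      assumption.
Qed.

Lemma joinable_le_transfer x t x' t' b :
  joinable (x, t) (x', t') -> leY meet b x ->
  exists b', leY meet b' x' /\ joinable (b, t) (b', t').
Proof.
  intros ([c u] & (r1 & E1 & H1) & (r2 & E2 & H2)) Hb; simpl in *.
  destruct (act_dom_le H1 Hb) as [b1 Hb1].
  assert (Hb1c : leY meet b1 c) by exact (act_le Hb1 H1 Hb).
  destruct (act_ran_le H2 Hb1c) as [b' Hb'].
  exists b'; split.
  - exact (act_le_inv Hb' H2 Hb1c).
  - exists (b1, u); split; [exists r1 | exists r2]; split; assumption.
Qed.

Lemma leX_inv r x t : leX meet act r (x, t) -> exists a, leY meet a x /\ joinable r (a, t).
Proof.
  intros (x0 & y0 & s0 & H1 & H2 & H3).
  apply simX_joinable in H1; apply simX_joinable in H2.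
  destruct (joinable_le_transfer (joinable_sym H1) H3) as (a & Ha & Ja).
  exists a; split; [exact Ha | exact (joinable_trans H2 Ja)].
Qed.

Lemma joinable_leX r x t a : joinable r (a, t) -> leY meet a x -> leX meet act r (x, t).
Proof.
  intros H1 H2; exists x, a, t; split; [apply rst_refl | split; [| exact H2]].
  apply simX_joinable; exact H1.
Qed.

Lemma leX_refl p : leX meet act p p.
Proof. destruct p as [x t]; exact (joinable_leX (joinable_refl _) (leY_refl HY x)). Qed.

Lemma leX_trans p q r : leX meet act p q -> leX meet act q r -> leX meet act p r.
Proof.
  destruct q as [x t], r as [z u]; intros H1 H2.
  destruct (leX_inv H1) as (b & Hb & Jb).
  destruct (leX_inv H2) as (a & Ha & Ja).
  destruct (joinable_le_transfer Ja Hb) as (b' & Hb' & Jb').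
  exact (joinable_leX (joinable_trans Jb Jb') (leY_trans HY Hb' Ha)).
Qed.

Lemma joinable_approxX p q : joinable p q -> approxX meet act p q.
Proof.
  destruct p as [y s], q as [x t]; intros H; split.
  - exact (joinable_leX H (leY_refl HY x)).
  - exact (joinable_leX (joinable_sym H) (leY_refl HY y)).
Qed.

Lemma approxX_trans p q r : approxX meet act p q -> approxX meet act q r -> approxX meet act p r.
Proof. intros [H1 H2] [H3 H4]; split; eapply leX_trans; eassumption. Qed.

Lemma leX_image u r y0 y f e :
  act r y0 = Some e -> leY meet y0 y -> leY meet f e -> leX meet act (f, u) (y, u ++ r).
Proof.
  intros He Hy0 Hfe.
  destruct (act_ran_le He Hfe) as [b Hb].
  apply (joinable_leX (a := b)).
  - apply joinable_sym, arrow_joinable; exists r; split; [reflexivity | exact Hb].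
  - exact (leY_trans HY (act_le_inv Hb He Hfe) Hy0).
Qed.

Lemma arrow_actX t p q : arrow act p q -> arrow act (actX t p) (actX t q).
Proof. intros (r & E & H); exists r; simpl; split; [rewrite E, app_assoc |]; auto. Qed.

Lemma joinable_actX t p q : joinable p q -> joinable (actX t p) (actX t q).
Proof. intros (c & H1 & H2); exists (actX t c); split; apply arrow_actX; assumption. Qed.

Lemma joinable_cancel_l t y s1 a s2 :
  joinable (y, t ++ s1) (a, t ++ s2) -> joinable (y, s1) (a, s2).
Proof.
  intros ([c u] & (q1 & E1 & H1) & (q2 & E2 & H2)); simpl in *.
  destruct (app_eq_app _ _ _ _ E1) as (l & [(-> & ->) | (-> & ->)]);
    rewrite <- app_assoc in E2; apply app_inv_head in E2; subst.
  - destruct (act_app_inv H1) as (y' & Hy1 & Hy2).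
    destruct (act_app_inv H2) as (a' & Ha1 & Ha2).
    rewrite (act_inj Ha2 Hy2) in Ha1.
    exists (y', []); split; [exists s1 | exists s2]; auto.
  - exists (c, l); split; [exists q1 | exists q2]; auto.
Qed.

Lemma leX_actX t p q : leX meet act p q <-> leX meet act (actX t p) (actX t q).
Proof.
  destruct p as [y s], q as [x u]; split; intros H.
  - destruct (leX_inv H) as (a & Ha & Ja).
    exact (joinable_leX (joinable_actX t Ja) Ha).
  - destruct (leX_inv H) as (a & Ha & Ja).
    exact (joinable_leX (joinable_cancel_l Ja) Ha).
Qed.

Lemma approxX_actX_nil p : approxX meet act (actX [] p) p.
Proof. destruct p; apply joinable_approxX, joinable_refl. Qed.

Lemma approxX_actX_app s t p : approxX meet act (actX (s ++ t) p) (actX s (actX t p)).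
Proof. destruct p; unfold actX; simpl; rewrite app_assoc; apply joinable_approxX, joinable_refl. Qed.

Lemma actX_range_ideal t p q : leX meet act q (actX t p) -> exists r, approxX meet act q (actX t r).
Proof.
  destruct p as [y s]; intros H.
  destruct (leX_inv H) as (a & _ & Ja).
  exists (a, s); apply joinable_approxX; exact Ja.
Qed.

Definition dom_max (t : list A) (d : Y) : Prop :=
  in_dom act t d /\ forall y, in_dom act t y -> leY meet y d.

(* The word [u] of a common upper bound of the two pairs is a prefix of [lcp s t]. *)
Lemma joinable_at_lcp a t b s t' s' :
  joinable (a, t) (b, s) -> t = lcp s t ++ t' -> s = lcp s t ++ s' ->
  exists c, act t' a = Some c /\ act s' b = Some c.
Proof.
  intros ([c0 u] & (q1 & E1 & H1) & (q2 & E2 & H2)) Et Es; simpl in *; subst t s.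
  destruct (lcp_app_l u q2 q1) as [w Ew]; rewrite Ew, <- app_assoc in Et, Es.
  apply app_inv_head in Et; apply app_inv_head in Es; subst q1 q2.
  destruct (act_app_inv H1) as (c & Hc & Hc0).
  destruct (act_app_inv H2) as (c' & Hc' & Hc0').
  rewrite (act_inj Hc0' Hc0) in Hc'; eauto.
Qed.

(* The meet of [y, s] and [x, t] lives over u = lcp s t: writing s = u s', t = u t',
   it is represented by (s'.(y /\ d_s')) /\ (t'.(x /\ d_t')) with d_w the greatest
   element of the domain of w. *)
Lemma meetX_exists (Hmax : forall t, exists d, dom_max t d) p q :
  exists m, is_meetX meet act m p q.
Proof.
  destruct p as [y s], q as [x t].
  destruct (lcp_prefix_l s t) as [s' Es]; destruct (lcp_prefix_r s t) as [t' Et].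
  destruct (Hmax s') as (d1 & [z1 Hz1] & Hd1); destruct (Hmax t') as (d2 & [z2 Hz2] & Hd2).
  destruct (act_dom_le Hz1 (leY_meet_r HY y d1)) as [e2 He2].
  destruct (act_dom_le Hz2 (leY_meet_r HY x d2)) as [e1 He1].
  exists (meet e1 e2, lcp s t); set (u := lcp s t) in *; split; [| split].
  - rewrite Es; exact (leX_image u He2 (leY_meet_l HY y d1) (leY_meet_r HY e1 e2)).
  - rewrite Et; exact (leX_image u He1 (leY_meet_l HY x d2) (leY_meet_l HY e1 e2)).
  - intros r H1 H2.
    destruct (leX_inv H1) as (b & Hb & Jb); destruct (leX_inv H2) as (a & Ha & Ja).
    destruct (joinable_at_lcp (joinable_trans (joinable_sym Ja) Jb) Et Es)
      as (c & Hac & Hbc).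
    apply (joinable_leX (a := c)).
    + apply (joinable_trans Ja), arrow_joinable.
      exists t'; split; [exact Et | exact Hac].
    + apply (leY_meet HY).
      * exact (act_le Hac He1 (leY_meet HY Ha (Hd2 a (ex_intro _ c Hac)))).
      * exact (act_le Hbc He2 (leY_meet HY Hb (Hd1 b (ex_intro _ c Hbc)))).
Qed.

Lemma joinable_nil_l a b s : joinable (a, []) (b, s) -> act s b = Some a.
Proof.
  intros ([c u] & (q1 & E1 & H1) & (q2 & E2 & H2)); simpl in *.
  symmetry in E1; apply app_eq_nil in E1 as [-> ->]; simpl in E2; subst q2.
  rewrite act_nil in H1; congruence.
Qed.

Lemma leX_nil_inv x y : leX meet act (x, []) (y, []) -> leY meet x y.
Proof.
  intros H; destruct (leX_inv H) as (a & Ha & Ja).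
  apply joinable_nil_l in Ja; rewrite act_nil in Ja; congruence.
Qed.

End OrderedPartialAction.

Section RestrictionMonoidM.
Variables (A Y : Type) (meet : Y -> Y -> Y) (act : list A -> Y -> option Y).
Hypothesis G : ordered_partial_action meet act.
Let HY := opa_semilattice G.

Lemma mulM_eq x s y t u v :
  act s u = Some x -> act s (meet u y) = Some v -> mulM meet act (x, s) (y, t) = (v, s ++ t).
Proof.
  intros Hu Hv.
  destruct (rev_act_spec (ex_intro _ u Hu)) as (u' & Hrev & Hu').
  rewrite (act_inj G Hu' Hu) in Hrev.
  unfold mulM; rewrite Hrev, Hv; reflexivity.
Qed.

Lemma starM_eq x t u : act t u = Some x -> starM act (x, t) = (u, []).
Proof.
  intros Hu.
  destruct (rev_act_spec (ex_intro _ u Hu)) as (u' & Hrev & Hu').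
  rewrite (act_inj G Hu' Hu) in Hrev.
  unfold starM; simpl; rewrite Hrev; reflexivity.
Qed.

Lemma mulM_nil e y t : mulM meet act (e, []) (y, t) = (meet e y, t).
Proof. exact (mulM_eq t (act_nil G e) (act_nil G _)). Qed.

Lemma is_projM_nil e : is_proj (inM act) (starM act) e -> e = (fst e, []).
Proof. intros (x & _ & ->); reflexivity. Qed.

Lemma rsigmaM_same_word z z' t :
  rsigma (inM act) (mulM meet act) (starM act) (z, t) (z', t).
Proof.
  exists (meet z z', []); split.
  - exists (meet z z', []); split; [exists (meet z z'); apply (act_nil G) |].
    symmetry; apply starM_eq, (act_nil G).
  - rewrite !mulM_nil, (leY_meet_l HY z z'), (leY_meet_r HY z z'); reflexivity.
Qed.

Lemma rsigmaM_word z t y s :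
  rsigma (inM act) (mulM meet act) (starM act) (z, t) (y, s) -> s = t.
Proof.
  intros ([e0 e1] & He & Heq); rewrite (is_projM_nil He), !mulM_nil in Heq; congruence.
Qed.

Lemma nat_leM_inv z t y s :
  nat_le (inM act) (mulM meet act) (starM act) (z, t) (y, s) -> leY meet z y.
Proof.
  intros ([e0 e1] & He & Heq); rewrite (is_projM_nil He), mulM_nil in Heq.
  injection Heq as -> _; apply (leY_meet_r HY).
Qed.

(* The maximum of the sigma-class of (t.y0, t) is (t.d, t) with d the greatest
   element of the domain of t. *)
Lemma dom_max_exists (HC : axiomC act)
  (HF : is_F_restriction (inM act) (mulM meet act) (starM act)) t :
  exists d, dom_max meet act t d.
Proof.
  destruct (HC t) as (y0 & z0 & H0).
  destruct (HF (z0, t)) as ([m s] & [d Hd] & Hsig & Hmax); [exists y0; exact H0 |].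
  simpl in Hd; rewrite (rsigmaM_word Hsig) in Hd.
  exists d; split; [exists m; exact Hd |].
  intros y [z Hz]; apply (act_le_inv G Hz Hd).
  exact (nat_leM_inv (Hmax (z, t) (ex_intro _ y Hz) (rsigmaM_same_word z0 z t))).
Qed.

Lemma is_meetX_mulM x s y u v :
  act s u = Some x -> act s (meet u y) = Some v ->
  is_meetX meet act (v, []) (x, []) (actX s (y, [])).
Proof.
  intros Hu Hv; unfold actX; simpl; rewrite app_nil_r; split; [| split].
  - exact (joinable_leX G (joinable_refl G _) (act_le G Hv Hu (leY_meet_l HY u y))).
  - exact (leX_image G [] Hv (leY_meet_r HY u y) (leY_refl HY v)).
  - intros r H1 H2.
    destruct (leX_inv G H1) as (a & Ha & Ja); destruct (leX_inv G H2) as (b & Hb & Jb).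
    pose proof (joinable_nil_l G (joinable_trans G (joinable_sym Ja) Jb)) as Hba.
    apply (joinable_leX G Ja), (act_le G Hba Hv), (leY_meet HY); [| exact Hb].
    exact (act_le_inv G Hba Hu Ha).
Qed.

Definition embedM (m : Y * list A) : (Y * list A) * list A := ((fst m, []), snd m).

Lemma embedM_inW m : inM act m -> inW meet act (embedM m).
Proof.
  destruct m as [y t]; intros [z Hz]; exists (z, []).
  apply (joinable_approxX G), joinable_sym, (arrow_joinable G).
  exists t; simpl; split; [rewrite app_nil_r; reflexivity | exact Hz].
Qed.

Lemma embedM_inj m n : eqW meet act (embedM m) (embedM n) -> m = n.
Proof.
  destruct m as [x s], n as [y t]; intros ([H1 H2] & Hst); simpl in *; subst t.
  rewrite (leY_antisym HY (leX_nil_inv G H1) (leX_nil_inv G H2)); reflexivity.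
Qed.

Lemma embedM_mul m n : inM act m ->
  is_meetX meet act (fst (embedM (mulM meet act m n))) (fst (embedM m))
    (actX (snd (embedM m)) (fst (embedM n))) /\
  snd (embedM (mulM meet act m n)) = snd (embedM m) ++ snd (embedM n).
Proof.
  destruct m as [x s], n as [y t]; intros [u Hu].
  destruct (act_dom_le G Hu (leY_meet_l HY u y)) as [v Hv].
  simpl in Hu; rewrite (mulM_eq t Hu Hv); split; [exact (is_meetX_mulM Hu Hv) | reflexivity].
Qed.

Lemma embedM_star m y : inM act m ->
  approxX meet act (fst (embedM m)) (actX (snd (embedM m)) y) ->
  eqW meet act (embedM (starM act m)) (y, []).
Proof.
  destruct m as [x t]; intros [u Hu] Hx; simpl in Hu, Hx.
  rewrite (starM_eq Hu); split; [| reflexivity]; simpl.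
  assert (Hut : approxX meet act (actX t (u, [])) (actX t y)).
  { apply (approxX_trans G) with (q := (x, [])); [| exact Hx].
    apply (joinable_approxX G), (arrow_joinable G).
    exists t; simpl; split; [rewrite app_nil_r; reflexivity | exact Hu]. }
  destruct Hut as [H1 H2]; split; apply (leX_actX G t); assumption.
Qed.

End RestrictionMonoidM.

Theorem theorem5p1 (A Y : Type) (meet : Y -> Y -> Y) (act : list A -> Y -> option Y)
  (HY : is_semilattice meet)
  (Hpa : is_left_partial_action act)
  (HA : axiomA meet act) (HB : axiomB meet act) (HC : axiomC act)
  (Hpd : partially_defined act)
  (HM : is_ultra_F_restriction_monoid (inM act) (mulM meet act) (starM act) (@plusM A Y)) :
  ((forall p, leX meet act p p) /\
   (forall p q r, leX meet act p q -> leX meet act q r -> leX meet act p r) /\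
   (forall p q, exists m, is_meetX meet act m p q)) /\
  ((forall p, approxX meet act (actX [] p) p) /\
   (forall s t p, approxX meet act (actX (s ++ t) p) (actX s (actX t p))) /\
   (forall t p q, leX meet act p q <-> leX meet act (actX t p) (actX t q)) /\
   (forall t p q, leX meet act q (actX t p) -> exists r, approxX meet act q (actX t r))) /\
  (exists phi : Y * list A -> (Y * list A) * list A,
     (forall m, inM act m -> inW meet act (phi m)) /\
     (forall m n, inM act m -> inM act n -> eqW meet act (phi m) (phi n) -> m = n) /\
     (forall m n, inM act m -> inM act n ->
        is_meetX meet act (fst (phi (mulM meet act m n))) (fst (phi m)) (actX (snd (phi m)) (fst (phi n))) /\
        (snd (phi (mulM meet act m n))) = (snd (phi m)) ++ (snd (phi n))) /\
     (forall m y, inM act m -> approxX meet act (fst (phi m)) (actX (snd (phi m)) y) ->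
        eqW meet act (phi (starM act m)) (y, [])) /\
     (forall m, inM act m -> eqW meet act (phi (plusM m)) ((fst (phi m)), []))).
Proof.
  assert (G : ordered_partial_action meet act) by (constructor; assumption).
  destruct HM as (_ & _ & _ & HF).
  split; [| split].
  - split; [| split].
    + exact (leX_refl G).
    + exact (leX_trans G).
    + exact (meetX_exists G (dom_max_exists G HC HF)).
  - split; [| split; [| split]].
    + exact (approxX_actX_nil G).
    + exact (approxX_actX_app G).
    + exact (leX_actX G).
    + exact (actX_range_ideal G).
  - exists (@embedM A Y); split; [| split; [| split; [| split]]].
    + exact (embedM_inW G).
    + intros m n _ _; apply (embedM_inj G).
    + intros m n Hm _; exact (embedM_mul G n Hm).
    + exact (embedM_star G).
    + intros m _; split; [apply (joinable_approxX G), (joinable_refl G) | reflexivity].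
Qed.
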